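(* For a (finite simple) graph $G$, the following are equivalent: (1) $G$ is threshold; (2) the clique hypergraph ${\cal C}(G)$ is $1$-Sperner; (3) ${\cal C}(G)$ is threshold; (4) ${\cal C}(G)$ is $2$-asummable.
   Context: A hypergraph ${\cal H}=(V,{\cal E})$ consists of a finite vertex set $V$ and a set ${\cal E}$ of subsets of $V$. A set $X\subseteq V$ is dependent if it contains some hyperedge, and independent otherwise. ${\cal H}$ is threshold if there exist $w:V\to\mathbb{Z}_{\ge0}$ and $t\in\mathbb{Z}_{\ge0}$ such that for every $X\subseteq V$, $\sum_{x\in X}w(x)\ge t$ iff $X$ is dependent. A graph is threshold if, viewed as the hypergraph $(V(G),E(G))$ whose hyperedges are its edges, it is threshold. ${\cal H}$ is $1$-Sperner if every two distinct hyperedges $e,f$ satisfy $\min\{|e\setminus f|,|f\setminus e|\}=1$. ${\cal H}$ is $2$-asummable if there are no independent sets $A_1,A_2$ and dependent sets $B_1,B_2$ (not necessarily distinct) with $\chi^{A_1}+\chi^{A_2}=\chi^{B_1}+\chi^{B_2}$, where $\chi^S\in\{0,1\}^V$ is the characteristic vector of $S$. The clique hypergraph ${\cal C}(G)$ has vertex set $V(G)$ and hyperedges the maximal cliques of $G$. *)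

From mathcomp Require Import all_boot.
Set Implicit Arguments. Unset Strict Implicit. Unset Printing Implicit Defensive.

(* A hypergraph with vertex set the finType T is given by its set of hyperedges
   E : {set {set T}}. *)
Section Hyper.
Variable T : finType.
Implicit Types (E : {set {set T}}) (X : {set T}).

Definition dependent E X : bool := [exists f in E, f \subset X].
Definition independent E X : bool := ~~ dependent E X.

Definition threshold_hyp E : Prop :=
  exists (w : T -> nat) (t : nat),
    forall X : {set T}, (t <= \sum_(x in X) w x) = dependent E X.

Definition one_Sperner E : Prop :=
  forall f g, f \in E -> g \in E -> f != g -> minn #|f :\: g| #|g :\: f| = 1.

Definition chi X (x : T) : nat := (x \in X).

Definition two_asummable E : Prop :=
  ~ exists A1 A2 B1 B2 : {set T},
      [/\ independent E A1, independent E A2, dependent E B1, dependent E B2 &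
          forall x, chi A1 x + chi A2 x = chi B1 x + chi B2 x].

Definition simple_graph (e : rel T) : Prop := symmetric e /\ irreflexive e.

Definition edge_hyp (e : rel T) : {set {set T}} :=
  [set S : {set T} | [exists x, exists y, e x y && (S == [set x; y])]].

Definition threshold_graph (e : rel T) : Prop := threshold_hyp (edge_hyp e).

Definition is_clique (e : rel T) X : bool :=
  [forall x in X, forall y in X, (x != y) ==> e x y].

Definition clique_hyp (e : rel T) : {set {set T}} :=
  [set K : {set T} | maxset (fun S : {set T} => is_clique e S) K].
End Hyper.

From mathcomp Require Import all_boot zify.
Set Implicit Arguments. Unset Strict Implicit. Unset Printing Implicit Defensive.

(* A graph is threshold iff it has no alternating 4-cycle: edges ab and cd with
   a != c, b != d and neither ac nor bd an edge.  Each condition on the clique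
   hypergraph excludes such a cycle: maximal cliques f containing {a,b} and g
   containing {c,d} differ by at least two vertices on each side, and exchanging
   a suitable vertex of f \ g with one of g \ f yields two independent sets whose
   characteristic vectors add up to those of f and g.  Conversely, without
   alternating 4-cycles every induced subgraph has a dominating or an isolated
   vertex (a vertex of maximum degree, or any non-neighbour of it), so weights
   and thresholds for the graph and for its clique hypergraph, as well as the
   1-Sperner property, are obtained by removing vertices one at a time. *)

Section FinsetSums.
Variable T : finType.
Implicit Types (X Y : {set T}).

Lemma sum_chi (w : T -> nat) X : \sum_(x in X) w x = \sum_x chi X x * w x.
Proof.
rewrite big_mkcond /=; apply: eq_bigr => x _.
by rewrite /chi; case: (x \in X); rewrite ?mul1n ?mul0n.
Qed.

Lemma sum_set2 (w : T -> nat) x y : x != y -> \sum_(z in [set x; y]) w z = w x + w y.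
Proof. by move=> xy; rewrite big_setU1 ?big_set1 // inE. Qed.

Lemma sum_update (w : T -> nat) a v X :
  \sum_(x in X) (if x == v then a else w x) = (v \in X) * a + \sum_(x in X :\ v) w x.
Proof.
have sumD1 : \sum_(x in X :\ v) (if x == v then a else w x) = \sum_(x in X :\ v) w x.
  by apply: eq_bigr => x /setD1P[/negbTE->].
have [vX|vX] := boolP (v \in X); first by rewrite (big_setD1 v vX) eqxx mul1n sumD1.
rewrite mul0n add0n -sumD1; apply: eq_bigl => x.
by rewrite !inE; case: eqP => // ->; apply/negbTE.
Qed.

Lemma sum_subset (w : T -> nat) X Y :
  X \subset Y -> \sum_(x in X) w x <= \sum_(x in Y) w x.
Proof. by move=> XY; rewrite [leqRHS](big_setID X) /= (setIidPr XY) leq_addr. Qed.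

Lemma minn_card_setD_set1 (f g : {set T}) v :
  f = [set v] -> v \notin g -> g != set0 -> minn #|f :\: g| #|g :\: f| = 1.
Proof.
move=> -> vg; rewrite -card_gt0 => g_gt0.
have -> : [set v] :\: g = [set v] by apply/setDidPl; rewrite disjoints1.
have -> : g :\: [set v] = g by apply/setDidPl; rewrite disjoint_sym disjoints1.
by rewrite cards1; lia.
Qed.

Lemma scale_threshold (w : T -> nat) m t X : #|X| < m ->
  (m * t <= \sum_(x in X) (m * w x + 1)) = (t <= \sum_(x in X) w x).
Proof.
move=> Xm; rewrite big_split /= sum1_card -big_distrr /=.
set S := \sum_(x in X) w x; apply/idP/idP => [|tS]; last first.
  by apply: leq_trans (leq_addr _ _); rewrite leq_mul2l tS orbT.
apply: contraTT; rewrite -!ltnNge => St.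
by apply: leq_trans (_ : m * S.+1 <= m * t); rewrite ?leq_mul2l ?St ?orbT // mulnS addnC ltn_add2r.
Qed.

End FinsetSums.

Section Hypergraph.
Variable T : finType.
Implicit Types (E : {set {set T}}) (X : {set T}).

Lemma threshold_two_asummable E : threshold_hyp E -> two_asummable E.
Proof.
move=> [w [t wtE]] [A1 [A2 [B1 [B2 [iA1 iA2 dB1 dB2 chiD]]]]].
have : \sum_(x in A1) w x + \sum_(x in A2) w x
       = \sum_(x in B1) w x + \sum_(x in B2) w x.
  by rewrite !sum_chi -!big_split /=; apply: eq_bigr => x _; rewrite -!mulnDl chiD.
move: (wtE A1) (wtE A2) (wtE B1) (wtE B2).
by rewrite dB1 dB2 (negbTE iA1) (negbTE iA2); lia.
Qed.

Lemma exchange_not_two_asummable E f g x y :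
  dependent E f -> dependent E g -> x \in f -> x \notin g -> y \in g -> y \notin f ->
  independent E (y |: (f :\ x)) -> independent E (x |: (g :\ y)) ->
  ~ two_asummable E.
Proof.
move=> df dg xf xg yg yf i1 i2; apply; exists (y |: (f :\ x)), (x |: (g :\ y)), f, g.
have xy : x != y by apply: contraNneq yf => <-.
split=> // z; rewrite /chi !inE.
have [->|zx] := eqVneq z x; first by rewrite xf (negbTE xg) (negbTE xy).
have [->|zy] := eqVneq z y; first by rewrite yg (negbTE yf).
by case: (z \in f); case: (z \in g).
Qed.

End Hypergraph.

Section Graph.
Variables (T : finType) (e : rel T).
Hypotheses (e_sym : symmetric e) (e_irr : irreflexive e).
Implicit Types (U K X : {set T}).

Lemma edge_neq x y : e x y -> x != y.
Proof. by apply: contraTneq => ->; rewrite e_irr. Qed.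

Lemma is_cliqueP K :
  reflect (forall x y, x \in K -> y \in K -> x != y -> e x y) (is_clique e K).
Proof.
apply: (iffP forallP) => [cK x y xK yK xy | cK x].
  by move: (cK x); rewrite xK => /forallP/(_ y); rewrite yK xy.
by apply/implyP => xK; apply/forallP => y; apply/implyP => yK; apply/implyP; apply: cK.
Qed.

Lemma clique_subset K1 K2 : K1 \subset K2 -> is_clique e K2 -> is_clique e K1.
Proof.
move=> K12 /is_cliqueP cK2; apply/is_cliqueP => x y xK1 yK1.
by apply: cK2; apply: (subsetP K12).
Qed.

Lemma clique_set1 v : is_clique e [set v].
Proof. by apply/is_cliqueP => x y; rewrite !inE => /eqP-> /eqP->; rewrite eqxx. Qed.

Lemma clique_set2 x y : e x y -> is_clique e [set x; y].
Proof.
move=> exy; apply/is_cliqueP => u v.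
by rewrite !inE => /orP[]/eqP-> /orP[]/eqP->; rewrite ?eqxx // e_sym.
Qed.

Lemma clique_notin K u v : is_clique e K -> v \in K -> u != v -> ~~ e u v -> u \notin K.
Proof. by move=> /is_cliqueP cK vK uv; apply: contra => uK; apply: cK. Qed.

Definition max_clique_in U := maxset (fun S => (S \subset U) && is_clique e S).

Lemma max_cliqueP U K :
  reflect [/\ K \subset U, is_clique e K &
             forall K', K' \subset U -> is_clique e K' -> K \subset K' -> K' = K]
          (max_clique_in U K).
Proof.
apply: (iffP maxsetP) => [[/andP[KU cK] maxK] | [KU cK maxK]].
  by split=> // K' K'U cK'; apply: maxK; rewrite K'U.
by split=> [|K' /andP[]]; [rewrite KU | exact: maxK].
Qed.

Lemma clique_hypE K : (K \in clique_hyp e) = max_clique_in setT K.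
Proof. by rewrite inE; apply: maxset_eq => S; rewrite subsetT. Qed.

Lemma max_clique_exists K : is_clique e K -> exists2 M, max_clique_in setT M & K \subset M.
Proof.
move=> cK; have PK : (K \subset setT) && is_clique e K by rewrite subsetT.
by have [M] := @maxset_exists _ (fun S => (S \subset setT) && is_clique e S) K PK; exists M.
Qed.

Definition clique_dependent U X := [exists K, max_clique_in U K && (K \subset X)].

Lemma dependent_clique_hyp X : dependent (clique_hyp e) X = clique_dependent setT X.
Proof. by apply: eq_existsb => K; rewrite clique_hypE. Qed.

Definition has_edge X := [exists x in X, exists y in X, e x y].

Lemma has_edgeP X : reflect (exists x y, [/\ x \in X, y \in X & e x y]) (has_edge X).
Proof.
apply: (iffP existsP) => [[x /andP[xX /existsP[y /andP[yX exy]]]] | [x [y [xX yX exy]]]].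
  by exists x, y.
by exists x; rewrite xX; apply/existsP; exists y; rewrite yX.
Qed.

Lemma dependent_edge_hyp X : dependent (edge_hyp e) X = has_edge X.
Proof.
apply/existsP/has_edgeP => [[f /andP[]] | [x [y [xX yX exy]]]].
  rewrite inE => /existsP[x /existsP[y /andP[exy /eqP->]]].
  by rewrite subUset !sub1set => /andP[xX yX]; exists x, y.
exists [set x; y]; rewrite subUset !sub1set xX yX !andbT inE.
by apply/existsP; exists x; apply/existsP; exists y; rewrite exy eqxx.
Qed.

Lemma has_edge_set2 x y : has_edge [set x; y] = e x y.
Proof.
apply/has_edgeP/idP => [[u [v []]] | exy]; last by exists x, y; rewrite set21 set22.
by rewrite !inE => /orP[]/eqP-> /orP[]/eqP->; rewrite ?e_irr // e_sym.
Qed.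

Lemma has_edge0 : has_edge set0 = false.
Proof. by apply/has_edgeP => -[x [y []]]; rewrite inE. Qed.

(* Excludes the induced 2K_2, P_4 and C_4 that characterize non-threshold graphs. *)
Definition alt_cycle_free := forall a b c d,
  e a b -> e c d -> a != c -> b != d -> e a c || e b d.

Lemma threshold_graph_alt_cycle_free : threshold_graph e -> alt_cycle_free.
Proof.
move=> [w [t wtE]] a b c d eab ecd ac bd; apply/negPn/negP; rewrite negb_or.
move=> /andP[nac nbd].
move: (wtE [set a; b]) (wtE [set c; d]) (wtE [set a; c]) (wtE [set b; d]).
rewrite !dependent_edge_hyp !has_edge_set2 eab ecd (negbTE nac) (negbTE nbd).
by rewrite !sum_set2 // ?edge_neq //; lia.
Qed.

Lemma max_cliques_of_alt_cycle a b c d :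
  e a b -> e c d -> a != c -> b != d -> ~~ e a c -> ~~ e b d ->
  exists f g, [/\ max_clique_in setT f, max_clique_in setT g,
                  [set a; b] \subset f :\: g & [set c; d] \subset g :\: f].
Proof.
move=> eab ecd ac bd nac nbd.
have [f mf abf] := max_clique_exists (clique_set2 eab).
have [g mg cdg] := max_clique_exists (clique_set2 ecd).
have [[_ clf _] [_ clg _]] := (max_cliqueP _ _ mf, max_cliqueP _ _ mg).
move: abf cdg; rewrite !subUset !sub1set => /andP[af bf] /andP[cg dg].
exists f, g; split; rewrite // subUset !sub1set !inE ?af ?bf ?cg ?dg !andbT.
  by rewrite (clique_notin clg cg) // (clique_notin clg dg).
rewrite (clique_notin clf af) 1?eq_sym 1?e_sym //.
by rewrite (clique_notin clf bf) 1?eq_sym 1?e_sym.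
Qed.

Lemma one_Sperner_alt_cycle_free : one_Sperner (clique_hyp e) -> alt_cycle_free.
Proof.
move=> sperner a b c d eab ecd ac bd; apply/negPn/negP; rewrite negb_or.
move=> /andP[nac nbd].
have [f [g [mf mg abfg cdgf]]] := max_cliques_of_alt_cycle eab ecd ac bd nac nbd.
have fg : f != g.
  by apply: contraTneq abfg => ->; rewrite setDv subset0 -cards_eq0 cards2.
have := sperner f g; rewrite !clique_hypE => /(_ mf mg fg).
have := subset_leq_card abfg; have := subset_leq_card cdgf.
by rewrite !cards2 (edge_neq eab) (edge_neq ecd); lia.
Qed.

Lemma exchange_adjacent_independent f x y :
  is_clique e f -> x \in f -> e x y -> ~~ clique_dependent setT (y |: (f :\ x)).
Proof.
move=> /is_cliqueP clf xf exy; apply/existsP => -[K /andP[/max_cliqueP[_ clK maxK] KA]].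
have xA : x \notin y |: (f :\ x) by rewrite !inE eqxx (negbTE (edge_neq exy)).
have clxK : is_clique e (x |: K).
  apply/is_cliqueP => u v; rewrite !inE => /orP[/eqP->|uK] /orP[/eqP->|vK];
    rewrite ?eqxx // => uv.
  - move: (subsetP KA v vK); rewrite !inE => /orP[/eqP->//|/andP[vx vf]].
    by apply: clf; rewrite // eq_sym.
  - move: (subsetP KA u uK); rewrite !inE => /orP[/eqP->|/andP[ux uf]].
      by rewrite e_sym.
    by rewrite e_sym; apply: clf; rewrite // eq_sym.
  - exact: (is_cliqueP _ clK).
have xK : x \in K by rewrite -(maxK (x |: K)) ?subsetT ?subsetUr ?setU11.
by move: xA; rewrite (subsetP KA).
Qed.

Lemma exchange_nonadjacent_independent f g x y y' :
  is_clique e f -> is_clique e g -> x \in f ->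
  y \in g :\: f -> y' \in g :\: f -> y' != y ->
  (forall u v, u \in f :\: g -> v \in g :\: f -> ~~ e u v) ->
  ~~ clique_dependent setT (y |: (f :\ x)).
Proof.
move=> clf clg xf ygf y'gf y'y noedge.
apply/existsP => -[K /andP[/max_cliqueP[_ clK maxK] KA]].
have [Kf|/subsetPn[k1 k1K k1f]] := boolP (K \subset f).
  have := subsetP KA x; rewrite -(maxK f (subsetT _) clf Kf) xf !inE eqxx /= orbF.
  by move=> /(_ isT) /eqP xy; move: ygf; rewrite -xy inE xf.
have [Kg|/subsetPn[k2 k2K k2g]] := boolP (K \subset g).
  case/setDP: y'gf => y'g /negbTE y'f.
  have := subsetP KA y'; rewrite -(maxK g (subsetT _) clg Kg) y'g !inE.
  by rewrite (negbTE y'y) y'f andbF => /(_ isT).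
have k1y : k1 = y.
  by move: (subsetP KA k1 k1K); rewrite !inE (negbTE k1f) andbF orbF => /eqP.
have k2f : k2 \in f.
  have := subsetP KA k2 k2K; rewrite !inE => /orP[/eqP k2y|/andP[//]].
  by move: k2g; rewrite k2y; case/setDP: ygf => ->.
have k2fg : k2 \in f :\: g by rewrite inE k2f k2g.
have k21 : k2 != k1 by apply: contraNneq k1f => <-; case/setDP: k2fg.
by move: (noedge _ _ k2fg ygf); rewrite -k1y (is_cliqueP _ clK).
Qed.

Lemma two_asummable_alt_cycle_free : two_asummable (clique_hyp e) -> alt_cycle_free.
Proof.
move=> asum a b c d eab ecd ac bd; apply/negPn/negP; rewrite negb_or.
move=> /andP[nac nbd].
have [f [g [mf mg abfg cdgf]]] := max_cliques_of_alt_cycle eab ecd ac bd nac nbd.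
have dep K : max_clique_in setT K -> dependent (clique_hyp e) K.
  by move=> mK; rewrite dependent_clique_hyp; apply/existsP; exists K; rewrite mK subxx.
have exchange x y : x \in f :\: g -> y \in g :\: f ->
    ~~ clique_dependent setT (y |: (f :\ x)) ->
    ~~ clique_dependent setT (x |: (g :\ y)) -> False.
  case/setDP=> xf xg /setDP[yg yf] i1 i2.
  by apply: (exchange_not_two_asummable (dep f mf) (dep g mg) xf xg yg yf) => //;
    rewrite /independent dependent_clique_hyp.
move: abfg cdgf; rewrite !subUset !sub1set => /andP[afg bfg] /andP[cgf dgf].
have [[_ clf _] [_ clg _]] := (max_cliqueP _ _ mf, max_cliqueP _ _ mg).
have [/existsP[x /andP[xfg /existsP[y /andP[ygf exy]]]] | noedge] :=
  boolP [exists x in f :\: g, exists y in g :\: f, e x y].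
  apply: (exchange x y) => //; apply: exchange_adjacent_independent => //.
  - by case/setDP: xfg.
  - by case/setDP: ygf.
  - by rewrite e_sym.
have {}noedge u v : u \in f :\: g -> v \in g :\: f -> ~~ e u v.
  by move=> ufg vgf; apply: contra noedge => euv; apply/existsP; exists u;
    rewrite ufg; apply/existsP; exists v; rewrite vgf.
have [bf _] := setDP bfg; have [dg _] := setDP dgf.
apply: (exchange b d) => //.
  apply: (exchange_nonadjacent_independent clf clg bf dgf cgf) => //.
  exact: edge_neq ecd.
apply: (exchange_nonadjacent_independent clg clf dg bfg afg).
  exact: edge_neq eab.
by move=> u v ugf vfg; rewrite e_sym; apply: noedge.
Qed.

Definition dominating v U := forall u, u \in U -> u != v -> e v u.
Definition isolated v U := forall u, u \in U -> ~~ e v u.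

Lemma clique_setU1 U K v :
  dominating v U -> K \subset U -> is_clique e K -> is_clique e (v |: K).
Proof.
move=> domv KU /is_cliqueP clK; apply/is_cliqueP => x y.
rewrite !inE => /orP[/eqP->|xK] /orP[/eqP->|yK]; rewrite ?eqxx // => xy.
- by apply: domv; [apply: (subsetP KU) | rewrite eq_sym].
- by rewrite e_sym; apply: domv; [apply: (subsetP KU) |].
- exact: clK.
Qed.

Lemma max_clique_in_set1 U v : v \in U -> isolated v U -> max_clique_in U [set v].
Proof.
move=> vU isov; apply/max_cliqueP; split; rewrite ?sub1set ?clique_set1 //.
move=> K KU /is_cliqueP clK vK; apply/eqP; rewrite eqEsubset vK andbT.
apply/subsetP => k kK; rewrite inE; apply: contraTT (isov k (subsetP KU k kK)) => kv.
by rewrite negbK; apply: clK; rewrite // 1?eq_sym // -sub1set.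
Qed.

Lemma max_clique_in_set1E U K v :
  v \in U -> isolated v U -> max_clique_in U K -> v \in K -> K = [set v].
Proof.
move=> vU isov /max_cliqueP[KU clK _] vK.
by case/max_cliqueP: (max_clique_in_set1 vU isov) => _ _; apply; rewrite ?sub1set.
Qed.

Lemma max_clique_in_neq0 U K : max_clique_in U K -> U != set0 -> K != set0.
Proof.
move=> /max_cliqueP[_ _ maxK] /set0Pn[u uU]; apply/negP => /eqP K0.
have := maxK [set u]; rewrite sub1set uU clique_set1 K0 sub0set => /(_ isT isT isT).
by move/setP/(_ u); rewrite !inE eqxx.
Qed.

Lemma max_clique_inD1 U K v : max_clique_in U K -> v \notin K -> max_clique_in (U :\ v) K.
Proof.
move=> /max_cliqueP[KU clK maxK] vK; apply/max_cliqueP.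
split=> [|//|K' /subsetP K'Uv]; first by rewrite subsetD1 KU.
by apply: maxK; apply/subsetP => x /K'Uv /setD1P[].
Qed.

Lemma max_clique_in_isolated U K v : isolated v U -> U :\ v != set0 ->
  max_clique_in (U :\ v) K -> max_clique_in U K.
Proof.
move=> isov Uv0 mK; have /set0Pn[k kK] := max_clique_in_neq0 mK Uv0.
case/max_cliqueP: mK => KUv clK maxK; apply/max_cliqueP.
have KU : K \subset U by apply: subset_trans KUv (subsetDl _ _).
split=> // K' K'U clK' KK'; apply: maxK => //.
have [kv _] := setD1P (subsetP KUv k kK).
have vK' : v \notin K'.
  apply: contraNN (isov k (subsetP KU k kK)) => vK'.
  by apply: (is_cliqueP _ clK'); rewrite // ?(subsetP KK') // eq_sym.
by rewrite subsetD1 K'U.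
Qed.

Lemma max_clique_in_dominating U K v : v \in U -> dominating v U ->
  max_clique_in (U :\ v) K -> max_clique_in U (v |: K).
Proof.
move=> vU domv /max_cliqueP[KUv clK maxK].
have [KU vK] : K \subset U /\ v \notin K by apply/andP; rewrite -subsetD1.
apply/max_cliqueP; split; [by rewrite subUset sub1set vU | exact: clique_setU1 domv KU clK |].
move=> K' K'U clK' vKK'; have vK' : v \in K' by rewrite (subsetP vKK') ?setU11.
rewrite -(setD1K vK') (maxK (K' :\ v)) ?setSD ?(clique_subset (subsetDl _ _)) //.
by rewrite subsetD1 vK andbT; apply: subset_trans vKK'; apply: subsetUr.
Qed.

Lemma max_clique_in_dominatingE U K v : v \in U -> dominating v U ->
  max_clique_in U K -> v \in K /\ max_clique_in (U :\ v) (K :\ v).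
Proof.
move=> vU domv /max_cliqueP[KU clK maxK].
have vK : v \in K.
  by rewrite -(maxK (v |: K)) ?setU11 ?subsetUr ?(clique_setU1 domv) // subUset sub1set vU.
split=> //; apply/max_cliqueP; split; [exact: setSD | exact: clique_subset (subsetDl _ _) clK |].
move=> K' K'Uv clK' KK'; have [K'U vK'] : K' \subset U /\ v \notin K'.
  by apply/andP; rewrite -subsetD1.
rewrite -(setU1K vK') (maxK (v |: K')) ?(clique_setU1 domv) ?subUset ?sub1set ?vU //.
by rewrite -{1}(setD1K vK) setUS.
Qed.

Lemma has_edge_isolated U X v : isolated v U -> X \subset U -> has_edge X = has_edge (X :\ v).
Proof.
move=> isov XU; apply/has_edgeP/has_edgeP => -[x [y [xX yX exy]]]; exists x, y; last first.
  by split=> //; [case/setD1P: xX | case/setD1P: yX].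
have xv : x != v by apply: contraTneq exy => ->; apply: isov (subsetP XU y yX).
have yv : y != v by apply: contraTneq exy => ->; rewrite e_sym; apply: isov (subsetP XU x xX).
by rewrite !inE xv yv xX yX.
Qed.

Lemma has_edge_dominating U X v : dominating v U -> X \subset U ->
  has_edge X = has_edge (X :\ v) || (v \in X) && (X :\ v != set0).
Proof.
move=> domv XU; apply/has_edgeP/orP => [[x [y [xX yX exy]]] | ].
  have [xv|xv] := eqVneq x v.
    right; rewrite -xv xX; apply/set0Pn; exists y.
    by rewrite !inE yX andbT eq_sym (edge_neq exy).
  have [yv|yv] := eqVneq y v.
    right; rewrite -yv yX; apply/set0Pn; exists x.
    by rewrite !inE xX andbT (edge_neq exy).
  by left; apply/has_edgeP; exists x, y; rewrite !inE xv yv xX yX.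
case=> [/has_edgeP[x [y [/setD1P[_ xX] /setD1P[_ yX] exy]]] | ].
  by exists x, y.
case/andP=> vX /set0Pn[u /setD1P[uv uX]].
by exists v, u; split=> //; apply: domv (subsetP XU u uX) uv.
Qed.

Lemma clique_dependent_dominating U X v : v \in U -> dominating v U ->
  clique_dependent U X = (v \in X) && clique_dependent (U :\ v) (X :\ v).
Proof.
move=> vU domv; apply/existsP/andP => [[K /andP[mK KX]] | [vX /existsP[K /andP[mK KXv]]]].
  have [vK mKv] := max_clique_in_dominatingE vU domv mK.
  by split; [exact: (subsetP KX) | apply/existsP; exists (K :\ v); rewrite mKv setSD].
exists (v |: K); rewrite (max_clique_in_dominating vU domv mK) subUset sub1set vX /=.
exact: subset_trans KXv (subsetDl _ _).
Qed.

Lemma clique_dependent_isolated U X v : v \in U -> isolated v U -> U :\ v != set0 ->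
  clique_dependent U X = (v \in X) || clique_dependent (U :\ v) (X :\ v).
Proof.
move=> vU isov Uv0; apply/existsP/orP => [[K /andP[mK KX]] | [vX | /existsP[K /andP[mK KXv]]]].
- have [vK | vK] := boolP (v \in K); first by left; apply: (subsetP KX).
  by right; apply/existsP; exists K; rewrite max_clique_inD1 //= subsetD1 KX.
- by exists [set v]; rewrite max_clique_in_set1 // sub1set.
- exists K; rewrite (max_clique_in_isolated isov Uv0 mK).
  exact: subset_trans KXv (subsetDl _ _).
Qed.

Definition threshold_on U (P : {set T} -> bool) := exists (w : T -> nat) (t : nat),
  forall X, X \subset U -> (t <= \sum_(x in X) w x) = P X.

Definition degree_in U x := #|[set y in U | e x y]|.

Section AltCycleFree.
Hypothesis alt_free : alt_cycle_free.

Lemma edge_to_larger_degree U x y z : x \in U -> y \in U -> z \in U ->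
  e x y -> z != x -> degree_in U y <= degree_in U z -> e x z.
Proof.
move=> xU yU zU exy zx deg_yz; apply/negPn/negP => nxz.
(* As x is a neighbour of y but not of z, some neighbour u of z is not one of y,
   and x y, z u form an alternating 4-cycle. *)
have zy : z != y by apply: contraNneq nxz => ->.
set Ny := [set u in U | e y u]; set Nz := [set u in U | e z u].
have [u uNz uNy] : exists2 u, u \in Nz :\ y & u \notin Ny :\ z.
  apply/subsetPn/negP => NzNy.
  have xNy : x \in Ny :\ z by rewrite !inE eq_sym zx xU e_sym.
  have xNz : x \notin Nz :\ y by rewrite !inE e_sym (negbTE nxz) !andbF.
  have /proper_card : Nz :\ y \proper Ny :\ z by apply/properP; split=> //; exists x.
  move: deg_yz; rewrite /degree_in -/Ny -/Nz (cardsD1 y Nz) (cardsD1 z Ny) !inE yU zU e_sym.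
  by case: (e z y) => /=; lia.
move: uNz uNy; rewrite !inE => /and3P[uy uU ezu]; rewrite uU /=.
case/nandP => [/negbNE/eqP uz | nyu]; first by move: ezu; rewrite uz e_irr.
have xz : x != z by rewrite eq_sym.
have yu : y != u by rewrite eq_sym.
by move: (alt_free exy ezu xz yu); rewrite (negbTE nxz) (negbTE nyu).
Qed.

Lemma dominating_or_isolated U : U != set0 ->
  exists2 v, v \in U & dominating v U \/ isolated v U /\ U :\ v != set0.
Proof.
case/set0Pn => u0 u0U; have [v vU maxv] := arg_maxnP (degree_in U) u0U.
have [domv | ] := boolP [forall u in U, (u != v) ==> e v u].
  by exists v; [|left => u uU uv; move/forall_inP/(_ u uU): domv; rewrite uv].
rewrite negb_forall_in => /existsP[y /andP[yU]]; rewrite negb_imply => /andP[yv nvy].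
exists y => //; right; split; last by apply/set0Pn; exists v; rewrite !inE eq_sym yv.
move=> u uU; apply: contra nvy => eyu.
by rewrite e_sym; apply: (edge_to_larger_degree yU uU vU eyu); [rewrite eq_sym | apply: maxv].
Qed.

Lemma vertex_elimination_ind (P : {set T} -> Prop) : P set0 ->
  (forall U v, v \in U -> dominating v U \/ isolated v U /\ U :\ v != set0 ->
     P (U :\ v) -> P U) ->
  forall U, P U.
Proof.
move=> P0 Pstep U; have [n] := ubnP #|U|; elim: n U => // n IH U.
have [-> _ // | U0 ltUn] := eqVneq U set0.
have [v vU hv] := dominating_or_isolated U0.
apply: (Pstep U v vU hv); apply: IH; by rewrite (cardsD1 v U) vU in ltUn.
Qed.

Lemma threshold_on_has_edge U : threshold_on U has_edge.
Proof.
elim/vertex_elimination_ind: U => [|U v vU [domv | [isov _]] [w [t wtE]]].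
- by exists (fun=> 0), 1 => X; rewrite subset0 => /eqP->; rewrite big_set0 has_edge0.
- have t_gt0 : 0 < t.
    by move: (wtE set0 (sub0set _)); rewrite big_set0 has_edge0 leqn0 lt0n => ->.
  (* Scaling by m > #|U :\ v| and adding 1 makes every vertex other than v
     count, so v reaches the threshold with any second vertex but not alone. *)
  pose m := #|U|.+1; have mt_gt0 : 0 < m * t by rewrite muln_gt0.
  exists (fun x => if x == v then m * t - 1 else m * w x + 1), (m * t) => X XU.
  rewrite sum_update (has_edge_dominating domv XU).
  have [vX | vX] := boolP (v \in X); last first.
    have Xv_lt : #|X :\ v| < m.
      by rewrite ltnS subset_leq_card // (subset_trans (subsetDl _ _) XU).
    by rewrite mul0n add0n orbF scale_threshold // wtE // setSD.
  rewrite mul1n /=; have [-> | /set0Pn[u uXv]] := eqVneq (X :\ v) set0.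
    by rewrite big_set0 has_edge0 addn0; lia.
  by rewrite /= orbT (big_setD1 u uXv) /=; lia.
- exists (fun x => if x == v then 0 else w x), t => X XU.
  by rewrite sum_update muln0 add0n wtE ?setSD // -(has_edge_isolated isov XU).
Qed.

Lemma threshold_on_clique_dependent U : threshold_on U (clique_dependent U).
Proof.
elim/vertex_elimination_ind: U => [|U v vU [domv | [isov Uv0]] [w [t wtE]]].
- exists (fun=> 0), 0 => X _; apply/esym/existsP; exists set0; rewrite sub0set andbT.
  apply/max_cliqueP; split; first exact: sub0set.
    by apply/is_cliqueP => x y; rewrite inE.
  by move=> K; rewrite subset0 => /eqP.
- pose M := (\sum_(x in U :\ v) w x).+1.
  exists (fun x => if x == v then M else w x), (t + M) => X XU.
  rewrite sum_update (clique_dependent_dominating _ vU domv).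
  have [vX | vX] := boolP (v \in X) => /=.
    by rewrite mul1n addnC leq_add2l wtE // setSD.
  rewrite mul0n add0n; apply/negbTE; rewrite -ltnNge.
  by apply: leq_trans (leq_addl t M); rewrite /M ltnS sum_subset // setSD.
- exists (fun x => if x == v then t else w x), t => X XU.
  rewrite sum_update (clique_dependent_isolated _ vU isov Uv0).
  have [vX | vX] := boolP (v \in X) => /=; first by rewrite mul1n leq_addr.
  by rewrite mul0n add0n wtE // setSD.
Qed.

Lemma max_clique_in_one_Sperner U f g :
  max_clique_in U f -> max_clique_in U g -> f != g -> minn #|f :\: g| #|g :\: f| = 1.
Proof.
elim/vertex_elimination_ind: U f g => [|U v vU [domv | [isov Uv0]] IH] f g mf mg fg.
- have max0 K : max_clique_in set0 K -> K = set0.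
    by case/max_cliqueP; rewrite subset0 => /eqP.
  by move: fg; rewrite (max0 f mf) (max0 g mg) eqxx.
- have [vf mfv] := max_clique_in_dominatingE vU domv mf.
  have [vg mgv] := max_clique_in_dominatingE vU domv mg.
  have setDD1 (A B : {set T}) : v \in B -> A :\: B = (A :\ v) :\: (B :\ v).
    by move=> vB; apply/setP => x; rewrite !inE; case: eqVneq => // ->; rewrite vB.
  rewrite (setDD1 f g vg) (setDD1 g f vf); apply: IH => //.
  by apply: contraNneq fg => fgv; rewrite -(setD1K vf) -(setD1K vg) fgv.
- have [vf|vf] := boolP (v \in f); have [vg|vg] := boolP (v \in g).
  + by move: fg; rewrite (max_clique_in_set1E vU isov mf vf) (max_clique_in_set1E vU isov mg vg) eqxx.
  + apply: (minn_card_setD_set1 (max_clique_in_set1E vU isov mf vf) vg).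
    exact: max_clique_in_neq0 (max_clique_inD1 mg vg) Uv0.
  + rewrite minnC; apply: (minn_card_setD_set1 (max_clique_in_set1E vU isov mg vg) vf).
    exact: max_clique_in_neq0 (max_clique_inD1 mf vf) Uv0.
  + exact: IH (max_clique_inD1 mf vf) (max_clique_inD1 mg vg) fg.
Qed.

End AltCycleFree.

Lemma threshold_graph_iff : threshold_graph e <-> alt_cycle_free.
Proof.
split=> [|acf]; first exact: threshold_graph_alt_cycle_free.
have [w [t wtE]] := threshold_on_has_edge acf setT.
by exists w, t => X; rewrite dependent_edge_hyp wtE ?subsetT.
Qed.

Lemma threshold_clique_hyp_iff : threshold_hyp (clique_hyp e) <-> alt_cycle_free.
Proof.
split=> [/threshold_two_asummable/two_asummable_alt_cycle_free // | acf].
have [w [t wtE]] := threshold_on_clique_dependent acf setT.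
by exists w, t => X; rewrite dependent_clique_hyp wtE ?subsetT.
Qed.

Lemma one_Sperner_clique_hyp_iff : one_Sperner (clique_hyp e) <-> alt_cycle_free.
Proof.
split=> [|acf f g]; first exact: one_Sperner_alt_cycle_free.
by rewrite !clique_hypE; apply: max_clique_in_one_Sperner.
Qed.

Lemma two_asummable_clique_hyp_iff : two_asummable (clique_hyp e) <-> alt_cycle_free.
Proof.
split=> [|acf]; first exact: two_asummable_alt_cycle_free.
exact/threshold_two_asummable/threshold_clique_hyp_iff.
Qed.

End Graph.

Theorem theorem20 (T : finType) (e : rel T) :
  simple_graph e ->
  [/\ (threshold_graph e <-> one_Sperner (clique_hyp e)),
      (threshold_graph e <-> threshold_hyp (clique_hyp e)) &
      (threshold_graph e <-> two_asummable (clique_hyp e))].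
Proof.
move=> [e_sym e_irr]; have thr := threshold_graph_iff e_sym e_irr.
split; apply: iff_trans thr (iff_sym _).
- exact: one_Sperner_clique_hyp_iff.
- exact: threshold_clique_hyp_iff.
- exact: two_asummable_clique_hyp_iff.
Qed.
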